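(* Let $\nu>0$ and $\epsilon\in\{0,1\}$, and let $\mathcal T:(X,T,U)\mapsto(x,t,u)$ be $$x=\frac X\nu+\frac T{\nu^3}-\frac T{\sqrt\nu},\qquad t=\frac T{\sqrt\nu},\qquad u=\frac U{\sqrt\nu}+\frac13\nu^{-5/2}-\frac13 .$$ Then the equation $$-2\nu^2U_XU_{XX}+3\epsilon U_XU-\nu^2U_{XXX}U+\tfrac23U_{XXX}-\tfrac23\nu^{5/2}U_{XXX}+\epsilon U_T-\nu^2U_{XXT}=0\qquad(E_{\nu,\epsilon})$$ describes pseudo-spherical surfaces with associated one-forms $\mathcal T^*\omega^i$, $i=1,2,3$, where $\omega^i$ are the one-forms of the following setting: for real $\alpha\neq0$, $\beta$ with $\alpha^2+\beta^2-1=\epsilon((\beta-1)/\alpha)^2$ and $m=u_{xx}-\epsilon u$, $\omega^1=(m-\beta+\epsilon\alpha^{-2}(\beta-1))dx+(-\beta u_x/\alpha-\beta/\alpha^2-um-1+u\beta+u_x/\alpha+1/\alpha^2)dt$, $\omega^2=\alpha\,dx+(-\beta/\alpha-\alpha u+1/\alpha+u_x)dt$, $\omega^3=(m+1)dx+(\epsilon u\alpha^{-2}(\beta-1)-um+1/\alpha^2+u_x/\alpha-u-\beta/\alpha^2-\beta u_x/\alpha)dt$. Here the pullback is computed by substituting $dx=\nu^{-1}dX+(\nu^{-3}-\nu^{-1/2})dT$, $dt=\nu^{-1/2}dT$, $u=U/\sqrt\nu+\frac13\nu^{-5/2}-\frac13$, $u_x=\sqrt\nu\,U_X$, $u_{x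x}=\nu^{3/2}U_{XX}$.
   Context: An equation describes pseudo-spherical surfaces if there are one-forms $\omega^i=f_{i1}dX+f_{i2}dT\neq0$ ($i=1,2,3$), with coefficients smooth functions of the independent variables, $U$ and finitely many derivatives of $U$, whose pullbacks by any solution satisfy $d\omega^1=\omega^3\wedge\omega^2$, $d\omega^2=\omega^1\wedge\omega^3$, $d\omega^3=\omega^1\wedge\omega^2$. *)

From Stdlib Require Import Reals List.
From Coquelicot Require Import Coquelicot.
Open Scope R_scope.

Definition DX (f : R -> R -> R) : R -> R -> R :=
  fun X T => Derive (fun y => f y T) X.
Definition DT (f : R -> R -> R) : R -> R -> R :=
  fun X T => Derive (fun s => f X s) T.

Fixpoint Dw (w : list bool) (f : R -> R -> R) : R -> R -> R :=
  match w with
  | nil => f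
  | b :: w' => (if b then DX else DT) (Dw w' f)
  end.

Definition smooth2 (f : R -> R -> R) : Prop :=
  forall (w : list bool) (X T : R),
    ex_derive (fun y => Dw w f y T) X /\
    ex_derive (fun s => Dw w f X s) T /\
    continuous (fun p : R * R => Dw w f (fst p) (snd p)) (X, T).

Definition eqE (nu eps : R) (U : R -> R -> R) (X T : R) : R :=
  let UX := DX U X T in
  let UXX := DX (DX U) X T in
  let UXXX := DX (DX (DX U)) X T in
  let UT := DT U X T in
  let UXXT := DT (DX (DX U)) X T in
  let V := U X T in
  - 2 * nu ^ 2 * UX * UXX + 3 * eps * UX * V - nu ^ 2 * UXXX * V
  + 2 / 3 * UXXX - 2 / 3 * (nu ^ 2 * sqrt nu) * UXXX
  + eps * UT - nu ^ 2 * UXXT.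

(* Coefficients of the one-forms omega^i = f_i1 dx + f_i2 dt, as functions
   of the jet variables (u, u_x, u_xx); m = u_xx - eps u. *)
Section Forms.
Variables (alpha beta eps u ux uxx : R).
Let m := uxx - eps * u.
Definition om1x := m - beta + eps * / alpha ^ 2 * (beta - 1).
Definition om1t := - beta * ux / alpha - beta / alpha ^ 2 - u * m - 1 + u * beta
                   + ux / alpha + 1 / alpha ^ 2.
Definition om2x := alpha.
Definition om2t := - beta / alpha - alpha * u + 1 / alpha + ux.
Definition om3x := m + 1.
Definition om3t := eps * u * / alpha ^ 2 * (beta - 1) - u * m + 1 / alpha ^ 2
                   + ux / alpha - u - beta / alpha ^ 2 - beta * ux / alpha.
End Forms.

(* The jet substitution induced by T : (X,T,U) |-> (x,t,u):
   u = U/sqrt nu + (1/3) nu^(-5/2) - 1/3, u_x = sqrt nu U_X,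
   u_xx = nu^(3/2) U_XX. *)
Definition sub_u (nu U0 : R) : R := U0 / sqrt nu + / 3 * / (nu ^ 2 * sqrt nu) - / 3.
Definition sub_ux (nu U1 : R) : R := sqrt nu * U1.
Definition sub_uxx (nu U2 : R) : R := nu * sqrt nu * U2.

(* Pullback of a dx + b dt, using dx = nu^-1 dX + (nu^-3 - nu^(-1/2)) dT and
   dt = nu^(-1/2) dT: returns the dX and dT coefficients. *)
Definition pbX (nu a b : R) : R := a / nu.
Definition pbT (nu a b : R) : R := a * (/ nu ^ 3 - / sqrt nu) + b / sqrt nu.

Definition F1X (nu eps alpha beta U0 U1 U2 : R) : R :=
  let u := sub_u nu U0 in let ux := sub_ux nu U1 in let uxx := sub_uxx nu U2 in
  pbX nu (om1x alpha beta eps u uxx) (om1t alpha beta eps u ux uxx).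
Definition F1T (nu eps alpha beta U0 U1 U2 : R) : R :=
  let u := sub_u nu U0 in let ux := sub_ux nu U1 in let uxx := sub_uxx nu U2 in
  pbT nu (om1x alpha beta eps u uxx) (om1t alpha beta eps u ux uxx).
Definition F2X (nu eps alpha beta U0 U1 U2 : R) : R :=
  let u := sub_u nu U0 in let ux := sub_ux nu U1 in
  pbX nu (om2x alpha) (om2t alpha beta u ux).
Definition F2T (nu eps alpha beta U0 U1 U2 : R) : R :=
  let u := sub_u nu U0 in let ux := sub_ux nu U1 in
  pbT nu (om2x alpha) (om2t alpha beta u ux).
Definition F3X (nu eps alpha beta U0 U1 U2 : R) : R :=
  let u := sub_u nu U0 in let ux := sub_ux nu U1 in let uxx := sub_uxx nu U2 in
  pbX nu (om3x eps u uxx) (om3t alpha beta eps u ux uxx).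
Definition F3T (nu eps alpha beta U0 U1 U2 : R) : R :=
  let u := sub_u nu U0 in let ux := sub_ux nu U1 in let uxx := sub_uxx nu U2 in
  pbT nu (om3x eps u uxx) (om3t alpha beta eps u ux uxx).

Definition along (F : R -> R -> R -> R) (U : R -> R -> R) : R -> R -> R :=
  fun X T => F (U X T) (DX U X T) (DX (DX U) X T).

Definition form_nonzero (FX FT : R -> R -> R -> R) : Prop :=
  exists U0 U1 U2 : R, FX U0 U1 U2 <> 0 \/ FT U0 U1 U2 <> 0.

(* Structure equations for pulled-back forms w^i = a_i dX + b_i dT:
   d w = (D_X b - D_T a) dX^dT, w^i ^ w^j = (a_i b_j - b_i a_j) dX^dT.
     d w1 = w3 ^ w2,  d w2 = w1 ^ w3,  d w3 = w1 ^ w2. *)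
Definition structure_eqs (a1 b1 a2 b2 a3 b3 : R -> R -> R) (X T : R) : Prop :=
  DX b1 X T - DT a1 X T = a3 X T * b2 X T - b3 X T * a2 X T /\
  DX b2 X T - DT a2 X T = a1 X T * b3 X T - b1 X T * a3 X T /\
  DX b3 X T - DT a3 X T = a1 X T * b2 X T - b1 X T * a2 X T.

(* After the chain rule, the coefficients of the pulled-back forms are rational
   functions of sqrt nu and of the jet of U.  Each structure equation then
   becomes an identity of the form  LHS - RHS = k1 * E + k2 * C,  where E is
   the left-hand side of E_{nu,eps} and C = alpha^2 + beta^2 - 1
   - eps ((beta - 1)/alpha)^2 is the constraint on the parameters; both vanish,
   so the structure equations hold.
   Nondegeneracy is read off the dX coefficients, which are affine in U_XX
   with slope sqrt nu (for omega^1, omega^3) or constant alpha/nu (omega^2). *)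

From Stdlib Require Import Reals Lra List.
From Coquelicot Require Import Coquelicot.
Open Scope R_scope.

Lemma Dw_app (w v : list bool) (f : R -> R -> R) : Dw (w ++ v) f = Dw w (Dw v f).
Proof. induction w as [|b w IH]; simpl; [reflexivity | now rewrite IH]. Qed.

Lemma smooth2_DX (f : R -> R -> R) : smooth2 f -> smooth2 (DX f).
Proof.
intros hf w X T.
change (DX f) with (Dw (true :: nil) f).
rewrite <- Dw_app.
apply hf.
Qed.

Lemma smooth2_ex_derive_X (f : R -> R -> R) (X T : R) :
  smooth2 f -> ex_derive (fun y => f y T) X.
Proof. intros hf. exact (proj1 (hf nil X T)). Qed.

Lemma smooth2_ex_derive_T (f : R -> R -> R) (X T : R) :
  smooth2 f -> ex_derive (fun s => f X s) T.
Proof. intros hf. exact (proj1 (proj2 (hf nil X T))). Qed.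

#[local] Hint Resolve smooth2_DX smooth2_ex_derive_X smooth2_ex_derive_T : smooth.

Lemma DX_is_derive (f : R -> R -> R) (X T l : R) :
  is_derive (fun y => f y T) X l -> DX f X T = l.
Proof. apply is_derive_unique. Qed.

Lemma DT_is_derive (f : R -> R -> R) (X T l : R) :
  is_derive (fun s => f X s) T l -> DT f X T = l.
Proof. apply is_derive_unique. Qed.

Lemma eq_of_combination (L R0 E C k1 k2 : R) :
  E = 0 -> C = 0 -> L - R0 = k1 * E + k2 * C -> L = R0.
Proof. intros -> ->. lra. Qed.

Lemma exists_nonzero_of_increment (f : R -> R) (c : R) :
  c <> 0 -> f 1 - f 0 = c -> exists x, f x <> 0.
Proof.
intros hc hf.
destruct (Req_dec (f 0) 0) as [h0|h0].
- exists 1. intros h1. apply hc. rewrite <- hf, h0, h1. ring.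
- now exists 0.
Qed.

Ltac unfold_forms := unfold along, F1X, F1T, F2X, F2T, F3X, F3T, pbX, pbT,
  om1x, om1t, om2x, om2t, om3x, om3t, sub_u, sub_ux, sub_uxx.

Ltac rewrite_partials :=
  repeat match goal with
  | |- context [DX (along ?F ?U) ?X ?T] =>
      erewrite (DX_is_derive (along F U) X T);
      [| unfold_forms; auto_derive; [repeat split; auto with smooth | reflexivity]]
  | |- context [DT (along ?F ?U) ?X ?T] =>
      erewrite (DT_is_derive (along F U) X T);
      [| unfold_forms; auto_derive; [repeat split; auto with smooth | reflexivity]]
  end.

Section Pullback.

Variables nu eps alpha beta : R.
Hypothesis nu_gt0 : 0 < nu.
Hypothesis eps01 : eps = 0 \/ eps = 1.
Hypothesis alpha_neq0 : alpha <> 0.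

Let constraint := alpha ^ 2 + beta ^ 2 - 1 - eps * ((beta - 1) / alpha) ^ 2.

Let sqrt_nu_gt0 : 0 < sqrt nu.
Proof. now apply sqrt_lt_R0. Qed.

Let nu_sqr : nu = sqrt nu * sqrt nu.
Proof. rewrite sqrt_sqrt; lra. Qed.

Lemma F1X_increment (U0 U1 : R) :
  F1X nu eps alpha beta U0 U1 1 - F1X nu eps alpha beta U0 U1 0 = sqrt nu.
Proof. unfold_forms. field. lra. Qed.

Lemma F3X_increment (U0 U1 : R) :
  F3X nu eps alpha beta U0 U1 1 - F3X nu eps alpha beta U0 U1 0 = sqrt nu.
Proof. unfold_forms. field. lra. Qed.

Lemma form1_nonzero : form_nonzero (F1X nu eps alpha beta) (F1T nu eps alpha beta).
Proof.
destruct (exists_nonzero_of_increment _ _ (Rgt_not_eq _ _ sqrt_nu_gt0)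
  (F1X_increment 0 0)) as [U2 h].
now exists 0, 0, U2; left.
Qed.

Lemma form2_nonzero : form_nonzero (F2X nu eps alpha beta) (F2T nu eps alpha beta).
Proof.
exists 0, 0, 0; left. unfold_forms.
apply Rmult_integral_contrapositive_currified; [exact alpha_neq0|].
apply Rinv_neq_0_compat. lra.
Qed.

Lemma form3_nonzero : form_nonzero (F3X nu eps alpha beta) (F3T nu eps alpha beta).
Proof.
destruct (exists_nonzero_of_increment _ _ (Rgt_not_eq _ _ sqrt_nu_gt0)
  (F3X_increment 0 0)) as [U2 h].
now exists 0, 0, U2; left.
Qed.

Variable U : R -> R -> R.
Hypothesis U_smooth : smooth2 U.
Hypothesis U_solves : forall X T, eqE nu eps U X T = 0.
Hypothesis params : alpha ^ 2 + beta ^ 2 - 1 = eps * ((beta - 1) / alpha) ^ 2.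

Let constraint0 : constraint = 0.
Proof. unfold constraint. lra. Qed.

Ltac reduce_to_field :=
  unfold_forms; unfold constraint, eqE, DX, DT;
  set (s := sqrt nu) in *; clearbody s; subst nu.

Lemma structure_eq1 (X T : R) :
  DX (along (F1T nu eps alpha beta) U) X T - DT (along (F1X nu eps alpha beta) U) X T
  = along (F3X nu eps alpha beta) U X T * along (F2T nu eps alpha beta) U X T
    - along (F3T nu eps alpha beta) U X T * along (F2X nu eps alpha beta) U X T.
Proof.
rewrite_partials.
apply (eq_of_combination _ _ _ _ (/ sqrt nu ^ 3) 0 (U_solves X T) constraint0).
reduce_to_field. field. lra.
Qed.

Lemma structure_eq2 (X T : R) :
  DX (along (F2T nu eps alpha beta) U) X T - DT (along (F2X nu eps alpha beta) U) X T
  = along (F1X nu eps alpha beta) U X T * along (F3T nu eps alpha beta) U X T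
    - along (F1T nu eps alpha beta) U X T * along (F3X nu eps alpha beta) U X T.
Proof.
rewrite_partials.
apply (eq_of_combination _ _ _ _ 0
  (- (/ (sqrt nu ^ 3 * alpha ^ 2) + DX U X T / (sqrt nu ^ 2 * alpha))
   + eps * sub_u nu (U X T) / (sqrt nu ^ 3 * alpha ^ 2))
  (U_solves X T) constraint0).
reduce_to_field. destruct eps01; subst eps; field; lra.
Qed.

Lemma structure_eq3 (X T : R) :
  DX (along (F3T nu eps alpha beta) U) X T - DT (along (F3X nu eps alpha beta) U) X T
  = along (F1X nu eps alpha beta) U X T * along (F2T nu eps alpha beta) U X T
    - along (F1T nu eps alpha beta) U X T * along (F2X nu eps alpha beta) U X T.
Proof.
rewrite_partials.
apply (eq_of_combination _ _ _ _ (/ sqrt nu ^ 3) (- / (sqrt nu ^ 3 * alpha))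
  (U_solves X T) constraint0).
reduce_to_field. destruct eps01; subst eps; field; lra.
Qed.

End Pullback.

Theorem corollary1 (nu eps alpha beta : R) :
  0 < nu -> (eps = 0 \/ eps = 1) -> alpha <> 0 ->
  alpha ^ 2 + beta ^ 2 - 1 = eps * ((beta - 1) / alpha) ^ 2 ->
  form_nonzero (F1X nu eps alpha beta) (F1T nu eps alpha beta) /\
  form_nonzero (F2X nu eps alpha beta) (F2T nu eps alpha beta) /\
  form_nonzero (F3X nu eps alpha beta) (F3T nu eps alpha beta) /\
  (forall U : R -> R -> R, smooth2 U ->
     (forall X T, eqE nu eps U X T = 0) ->
     forall X T,
       structure_eqs
         (along (F1X nu eps alpha beta) U) (along (F1T nu eps alpha beta) U)
         (along (F2X nu eps alpha beta) U) (along (F2T nu eps alpha beta) U)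
         (along (F3X nu eps alpha beta) U) (along (F3T nu eps alpha beta) U)
         X T).
Proof.
intros hnu heps ha hparams.
split; [now apply form1_nonzero|].
split; [now apply form2_nonzero|].
split; [now apply form3_nonzero|].
intros U hU hE X T.
split; [|split].
- now apply structure_eq1.
- now apply structure_eq2.
- now apply structure_eq3.
Qed.
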